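(* For all $z\in\mathbb{R}$, $$\chi_1(z)=\sqrt{\pi}\,\varphi_1(z)+\psi_1(z),\qquad \chi_2(z)=\sqrt{\pi}\,\bigl[\varphi_2(z)-\ln 2\;\varphi_1(z)\bigr]+\psi_2(z),$$ where $\varphi_1,\varphi_2$ are odd and $\psi_1,\psi_2$ are even functions.
   Context: Define $\chi_0(z)=1$ and, for $i\ge1$, $\chi_i(z)=2\int_0^z dy\,e^{y^2}\int_{-\infty}^y du\,e^{-u^2}\chi_{i-1}(u)$, $z\in\mathbb{R}$. Define $\varphi_1(x)=\int_0^x e^{t^2}dt$; $\psi_1(x)=2\int_0^x dt\,e^{t^2}\int_0^t du\,e^{-u^2}$; $\varphi_2(x)=2\int_0^x dt_2\,e^{t_2^2}\int_0^{t_2}du_2\,e^{-u_2^2}\int_0^{u_2}dt_1\,e^{t_1^2}$; $\psi_2(x)=4\int_0^x dt_2\,e^{t_2^2}\int_0^{t_2}du_2\,e^{-u_2^2}\int_0^{u_2}dt_1\,e^{t_1^2}\int_0^{t_1}du_1\,e^{-u_1^2}$. *)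

From Stdlib Require Import Reals.
From Coquelicot Require Import Coquelicot.
Open Scope R_scope.

Fixpoint chi (i : nat) (z : R) : R :=
  match i with
  | O => 1
  | S j => 2 * RInt (fun y => exp (y ^ 2) *
             RInt_gen (fun u => exp (- u ^ 2) * chi j u)
                      (Rbar_locally m_infty) (at_point y)) 0 z
  end.

Definition phi1 (x : R) : R := RInt (fun t => exp (t ^ 2)) 0 x.

Definition psi1 (x : R) : R :=
  2 * RInt (fun t => exp (t ^ 2) * RInt (fun u => exp (- u ^ 2)) 0 t) 0 x.

Definition phi2 (x : R) : R :=
  2 * RInt (fun t2 => exp (t2 ^ 2) *
        RInt (fun u2 => exp (- u2 ^ 2) *
          RInt (fun t1 => exp (t1 ^ 2)) 0 u2) 0 t2) 0 x.

Definition psi2 (x : R) : R :=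
  4 * RInt (fun t2 => exp (t2 ^ 2) *
        RInt (fun u2 => exp (- u2 ^ 2) *
          RInt (fun t1 => exp (t1 ^ 2) *
            RInt (fun u1 => exp (- u1 ^ 2)) 0 t1) 0 u2) 0 t2) 0 x.

(* Write S(x) = ∫_0^x e^{-u²} du and E(x) = √π/2 - S(x).  The inner integral in χ₁ is
   ∫_{-∞}^y e^{-u²} du = S(y) + √π/2, where the value √π/2 of the Gaussian integral comes from
   G(t) = ∫_0^1 e^{-t²(1+r²)}/(1+r²) dr: S² + G has derivative zero and G(0) = π/4.  This gives
   the formula for χ₁.

   For χ₂ one needs the limit at -∞ of P(u) = ∫_0^u e^{-v²} χ₁(v) dv.  Integrating by parts,
   P(u) = (S(u) + √π/2) χ₁(u) + 2 ∫_0^{-u} e^{t²} E(t)² dt, so the limit is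
   2 ∫_0^∞ e^{t²} E(t)² dt.  By Craig's formula e^{x²} E(x)² = ∫_0^1 e^{-x²/r²}/(1+r²) dr
   (x > 0), the integral ∫_0^x e^{t²} E(t)² dt equals ∫_0^1 r S(x/r)/(1+r²) dr, which tends
   to (√π/2) ∫_0^1 r/(1+r²) dr = √π ln 2 / 4.  Knowing this constant, χ₂ is identified by
   differentiation; the parities hold because the primitive from 0 of an even (odd) function
   is odd (even). *)

From Stdlib Require Import Reals Lra.
From Coquelicot Require Import Coquelicot.
Open Scope R_scope.
Implicit Types (f g df : R -> R) (a b c k l r t u v x y z : R).

(** * Calculus on the real line *)

Definition continuous_R f := forall x, continuous f x.

Lemma continuous_R_ex_derive f : (forall x, ex_derive f x) -> continuous_R f.
Proof. intros H x. apply (ex_derive_continuous (V := R_NormedModule)), H. Qed.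

Lemma locally_continuity_pt f x : continuous_R f -> locally x (continuity_pt f).
Proof. intros H. apply filter_forall. intros y. apply continuity_pt_filterlim, H. Qed.

Lemma ex_RInt_continuous_R f a b : continuous_R f -> ex_RInt f a b.
Proof.
  intros H. apply (ex_RInt_continuous (V := R_CompleteNormedModule)). intros; apply H.
Qed.

Lemma RInt_scal_R f k a b : ex_RInt f a b -> RInt (fun x => k * f x) a b = k * RInt f a b.
Proof. apply (RInt_scal (V := R_CompleteNormedModule)). Qed.

Lemma RInt_minus_R f g a b :
  ex_RInt f a b -> ex_RInt g a b -> RInt (fun x => f x - g x) a b = RInt f a b - RInt g a b.
Proof. apply (RInt_minus (V := R_CompleteNormedModule)). Qed.

Lemma is_derive_ext_R f g x l : (forall t, f t = g t) -> is_derive f x l -> is_derive g x l.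
Proof. apply is_derive_ext. Qed.

Lemma Derive_of_is_derive f x l : is_derive f x l -> Derive (fun y => f y) x = l.
Proof. apply is_derive_unique. Qed.

Lemma is_derive_RInt_upper f a x : continuous_R f -> is_derive (fun y => RInt f a y) x (f x).
Proof.
  intros H. apply (is_derive_RInt f _ a x); [| apply H].
  apply filter_forall. intros b.
  apply (RInt_correct (V := R_CompleteNormedModule)), ex_RInt_continuous_R, H.
Qed.

(* The [is_derive] facts of named functions are registered below as [Hint Extern] keyed on the
   function symbol: with [Hint Resolve], a failed unification between two named integrals
   unfolds both down to the construction of the real numbers. *)
Create HintDb smooth.

Ltac smooth :=
  lazymatch goal with
  | |- continuous_R _ => first [assumption | apply continuous_R_ex_derive; intro; smooth]
  | |- ex_derive ?F ?x =>
      lazymatch F with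
      | fun y => RInt _ _ y => auto_derive; smooth
      | fun y => ?h y => change (ex_derive h x); eexists; solve [eauto with smooth]
      | fun _ => _ => auto_derive; smooth
      | _ => eexists; solve [eauto with smooth]
      end
  | |- _ /\ _ => split; smooth
  | |- True => exact I
  | |- ex_RInt _ _ _ => apply ex_RInt_continuous_R; smooth
  | |- locally _ (fun _ => continuity_pt _ _) => apply locally_continuity_pt; smooth
  | |- 1 + _ <> 0 => let H := fresh in intro H; nra
  | _ => auto with smooth
  end.

Ltac rewrite_Derive :=
  repeat match goal with
  | |- context [Derive (fun y => ?h y) ?x] =>
      erewrite (Derive_of_is_derive h x) by solve [eauto with smooth]
  end.

Lemma RInt_derive f df a b :
  (forall x, is_derive f x (df x)) -> continuous_R df -> RInt df a b = f b - f a.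
Proof.
  intros Hf Hdf. apply is_RInt_unique.
  apply (is_RInt_derive f df); intros x _; [apply Hf | apply Hdf].
Qed.

Lemma is_derive_0_eq f a b : a <= b -> (forall x, a <= x <= b -> is_derive f x 0) -> f a = f b.
Proof.
  intros Hab H. assert (Hi := is_RInt_derive f (fun _ => 0) a b).
  rewrite Rmin_left, Rmax_right in Hi by lra.
  specialize (Hi H (fun x _ => continuous_const 0 x)).
  apply is_RInt_unique in Hi. rewrite RInt_const in Hi.
  change ((b - a) * 0 = f b - f a) in Hi. lra.
Qed.

Lemma eq_of_is_derive f g df x0 :
  (forall x, is_derive f x (df x)) -> (forall x, is_derive g x (df x)) ->
  f x0 = g x0 -> forall x, f x = g x.
Proof.
  intros Hf Hg E x.
  assert (Hd : forall y, is_derive (fun z => f z - g z) y 0).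
  { intros y. replace 0 with (df y - df y) by ring.
    apply (is_derive_minus f g); [apply Hf | apply Hg]. }
  destruct (Rle_or_lt x0 x) as [Hle | Hlt].
  - assert (K := is_derive_0_eq _ x0 x Hle (fun y _ => Hd y)). simpl in K. lra.
  - assert (K := is_derive_0_eq _ x x0 (Rlt_le _ _ Hlt) (fun y _ => Hd y)). simpl in K. lra.
Qed.

Lemma RInt_0_opp_of_even f :
  continuous_R f -> (forall y, f (- y) = f y) -> forall x, RInt f 0 (- x) = - RInt f 0 x.
Proof.
  intros C E. apply (eq_of_is_derive _ _ (fun y => - f y) 0).
  - intros x. auto_derive; [smooth | rewrite E; ring].
  - intros x. auto_derive; [smooth | ring].
  - rewrite Ropp_0, RInt_point. change (0 = - 0). ring.
Qed.

Lemma RInt_0_opp_of_odd f :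
  continuous_R f -> (forall y, f (- y) = - f y) -> forall x, RInt f 0 (- x) = RInt f 0 x.
Proof.
  intros C E. apply (eq_of_is_derive _ _ f 0).
  - intros x. auto_derive; [smooth | rewrite E; ring].
  - intros x. apply is_derive_RInt_upper, C.
  - rewrite Ropp_0. reflexivity.
Qed.

Lemma eq_0_of_abs_le_small c K : (forall a, 0 < a <= 1 -> Rabs c <= K * a) -> c = 0.
Proof.
  intros H. destruct (Req_dec c 0) as [| Hc]; [assumption | exfalso].
  assert (Hc' : 0 < Rabs c) by (apply Rabs_pos_lt, Hc).
  assert (HK : 0 < K) by (specialize (H 1 ltac:(lra)); lra).
  set (a := Rmin 1 (Rabs c / (2 * K))).
  assert (Ha : 0 < a <= 1).
  { split; [apply Rmin_pos; [lra | apply Rdiv_lt_0_compat; lra] | apply Rmin_l]. }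
  assert (Hac : a * (2 * K) <= Rabs c).
  { apply (Rmult_le_reg_r (/ (2 * K))); [apply Rinv_0_lt_compat; lra |].
    rewrite Rmult_assoc, Rinv_r, Rmult_1_r by lra. apply Rmin_r. }
  specialize (H a Ha). nra.
Qed.

Lemma eq_0_of_abs_le_inv c K : (forall y, 1 <= y -> Rabs c <= K / y) -> c = 0.
Proof.
  intros H. apply (eq_0_of_abs_le_small c K). intros a Ha.
  specialize (H (/ a)). rewrite Rdiv_def, Rinv_inv in H. apply H.
  rewrite <- Rinv_1. apply Rinv_le_contravar; lra.
Qed.

Lemma is_lim_m_infty_of_abs_le (G : R -> R) (L K : R) :
  (forall a, a <= -1 -> Rabs (G a - L) <= K / - a) -> is_lim G m_infty L.
Proof.
  intros H P [eps HP]. exists (Rmin (-1) (- (Rabs K + 1) / eps)). intros a Ha.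
  apply HP. change (Rabs (G a - L) < eps).
  assert (Ha1 : a < -1) by (eapply Rlt_le_trans; [apply Ha | apply Rmin_l]).
  assert (Ha2 : a < - (Rabs K + 1) / eps) by (eapply Rlt_le_trans; [apply Ha | apply Rmin_r]).
  assert (Heps := cond_pos eps).
  assert (HKa : Rabs K + 1 < eps * - a).
  { apply (Rmult_lt_compat_l eps) in Ha2; [| exact Heps].
    replace (eps * (- (Rabs K + 1) / eps)) with (- (Rabs K + 1)) in Ha2 by (field; lra).
    lra. }
  eapply Rle_lt_trans; [apply H; lra |].
  apply (Rmult_lt_reg_r (- a)); [lra |].
  unfold Rdiv. rewrite Rmult_assoc, Rinv_l by lra.
  generalize (Rle_abs K). lra.
Qed.

Lemma RInt_gen_m_infty f (G : R -> R) (L : R) y :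
  (forall x, is_derive G x (f x)) -> continuous_R f -> is_lim G m_infty L ->
  RInt_gen f (Rbar_locally m_infty) (at_point y) = G y - L.
Proof.
  intros HG Hf HL. apply (is_RInt_gen_unique (V := R_CompleteNormedModule)).
  intros P [eps Heps]. destruct (HL _ (locally_ball L eps)) as [M HM].
  apply (Filter_prod _ _ _ (fun a => a < M) (fun b => b = y)); [exists M; auto | reflexivity |].
  intros a b Ha ->. exists (G y - G a). split.
  - apply (is_RInt_derive G f); intros x _; [apply HG | apply Hf].
  - apply Heps. specialize (HM a Ha). change (Rabs (G a - L) < eps) in HM.
    change (Rabs (G y - G a - (G y - L)) < eps).
    replace (G y - G a - (G y - L)) with (- (G a - L)) by ring.
    rewrite Rabs_Ropp. exact HM.
Qed.

Lemma locally_pos x : 0 < x -> locally x (fun y => 0 < y).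
Proof.
  intros Hx. exists (mkposreal x Hx). intros y Hy. change (Rabs (y - x) < x) in Hy.
  apply Rabs_def2 in Hy. lra.
Qed.

Lemma continuity_2d_pt_vanishing (F : R -> R -> R) x K :
  locally_2d (fun u v => Rabs (F u v) <= K * Rabs v) x 0 -> continuity_2d_pt F x 0.
Proof.
  intros [d Hd] eps.
  assert (HF0 : F x 0 = 0).
  { assert (H := Hd x 0). rewrite !Rminus_eq_0, Rabs_R0, Rmult_0_r in H.
    apply Rabs_eq_0, Rle_antisym; [apply H; apply cond_pos | apply Rabs_pos]. }
  assert (HK := Rabs_pos K).
  assert (Hpos : 0 < eps / (Rabs K + 1)) by (apply Rdiv_lt_0_compat; [apply cond_pos | lra]).
  exists (mkposreal _ (Rmin_pos _ _ (cond_pos d) Hpos)). intros u v Hu Hv. simpl in Hu, Hv.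
  rewrite Rminus_0_r in Hv. rewrite HF0, Rminus_0_r.
  assert (Hud : Rabs (u - x) < d) by (eapply Rlt_le_trans; [exact Hu | apply Rmin_l]).
  assert (Hvd : Rabs v < d) by (eapply Rlt_le_trans; [exact Hv | apply Rmin_l]).
  assert (Hve : Rabs v < eps / (Rabs K + 1)) by (eapply Rlt_le_trans; [exact Hv | apply Rmin_r]).
  eapply Rle_lt_trans; [apply Hd; [exact Hud | rewrite Rminus_0_r; exact Hvd] |].
  apply Rle_lt_trans with ((Rabs K + 1) * Rabs v).
  - generalize (Rle_abs K) (Rabs_pos v). nra.
  - apply (Rmult_lt_compat_l (Rabs K + 1)) in Hve; [| lra].
    replace ((Rabs K + 1) * (eps / (Rabs K + 1))) with (pos eps) in Hve by (field; lra).
    exact Hve.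
Qed.

Lemma continuous_of_continuity_2d_pt (F : R -> R -> R) x r :
  continuity_2d_pt F x r -> continuous (F x) r.
Proof.
  intros H. apply continuity_pt_filterlim. intros eps Heps.
  destruct (H (mkposreal eps Heps)) as [d Hd].
  exists d. split; [apply cond_pos |]. intros v [_ Hv]. apply (Hd x v); [| exact Hv].
  rewrite Rminus_eq_0, Rabs_R0. apply cond_pos.
Qed.

Lemma exp_le_compat a b : a <= b -> exp a <= exp b.
Proof. intros [Hlt | ->]; [left; apply exp_increasing, Hlt | right; reflexivity]. Qed.

Lemma exp_neg_le_inv y : 0 < y -> exp (- y) <= / y.
Proof.
  intros Hy. rewrite exp_Ropp. apply Rinv_le_contravar; [exact Hy |].
  generalize (exp_ineq1_le y). lra.
Qed.

Lemma exp_neg_le_inv_sq y : 0 < y -> exp (- y) <= 4 / y ^ 2.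
Proof.
  intros Hy. replace (- y) with (- (y / 2) + - (y / 2)) by field.
  rewrite exp_plus. replace (4 / y ^ 2) with (/ (y / 2) * / (y / 2)) by (field; lra).
  assert (H := exp_neg_le_inv (y / 2) ltac:(lra)). assert (H0 := exp_pos (- (y / 2))).
  apply Rmult_le_compat; lra.
Qed.

Lemma exp_neg_sq_le_inv x : 1 <= x -> exp (- x ^ 2) <= / x.
Proof.
  intros Hx. eapply Rle_trans; [apply exp_neg_le_inv; nra |].
  apply Rinv_le_contravar; nra.
Qed.

Lemma exp_sq_opp y : exp ((- y) ^ 2) = exp (y ^ 2).
Proof. f_equal. ring. Qed.

Lemma exp_neg_sq_opp y : exp (- (- y) ^ 2) = exp (- y ^ 2).
Proof. f_equal. ring. Qed.

Lemma pow2_gt_0 x : x <> 0 -> 0 < x ^ 2.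
Proof. intros H. rewrite <- Rsqr_pow2. apply Rsqr_pos_lt, H. Qed.

Lemma one_plus_sq_pos r : 0 < 1 + r ^ 2.
Proof. nra. Qed.

Lemma one_plus_sq_neq_0 r : 1 + r ^ 2 <> 0.
Proof. generalize (one_plus_sq_pos r). lra. Qed.

(** * The Gaussian integral *)

Definition gauss x := RInt (fun u => exp (- u ^ 2)) 0 x.

Lemma is_derive_gauss x : is_derive gauss x (exp (- x ^ 2)).
Proof. apply (is_derive_RInt_upper (fun u => exp (- u ^ 2))). smooth. Qed.

#[global] Hint Extern 1 (is_derive gauss _ _) => simple apply is_derive_gauss : smooth.

Ltac continuity_2d :=
  unfold Rdiv; cbn [pow];
  repeat first
    [ apply continuity_2d_pt_mult | apply continuity_2d_pt_plus
    | apply continuity_2d_pt_minus | apply continuity_2d_pt_opp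
    | apply continuity_2d_pt_id1 | apply continuity_2d_pt_id2
    | apply continuity_2d_pt_const
    | apply (continuity_1d_2d_pt_comp exp); [apply continuity_pt_filterlim, continuous_exp |]
    | apply (continuity_1d_2d_pt_comp gauss);
      [apply continuity_pt_filterlim, (ex_derive_continuous (V := R_NormedModule)); smooth |]
    | apply continuity_2d_pt_inv ].

Lemma gauss_0 : gauss 0 = 0.
Proof. apply (RInt_point (V := R_CompleteNormedModule)). Qed.

Lemma gauss_opp x : gauss (- x) = - gauss x.
Proof. apply RInt_0_opp_of_even; [smooth | apply exp_neg_sq_opp]. Qed.

Lemma gauss_le a b : a <= b -> gauss a <= gauss b.
Proof.
  intros Hab. unfold gauss.
  rewrite <- (RInt_Chasles (V := R_CompleteNormedModule) _ 0 a b) by smooth.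
  assert (0 <= RInt (fun u => exp (- u ^ 2)) a b); [| change (plus ?u ?v) with (u + v); lra].
  apply RInt_ge_0; [exact Hab | smooth |]. intros; left; apply exp_pos.
Qed.

Lemma Rabs_gauss_le x : Rabs (gauss x) <= Rabs x.
Proof.
  assert (Hpos : forall y, 0 <= y -> Rabs (gauss y) <= y).
  { intros y Hy. eapply Rle_trans.
    - apply abs_RInt_le_const with (M := 1); [exact Hy | smooth |].
      intros t _. rewrite Rabs_pos_eq by (left; apply exp_pos).
      rewrite <- exp_0. apply exp_le_compat. nra.
    - lra. }
  destruct (Rle_or_lt 0 x) as [Hx | Hx].
  - rewrite (Rabs_pos_eq x) by exact Hx. apply Hpos, Hx.
  - rewrite (Rabs_left x), <- Rabs_Ropp, <- gauss_opp by exact Hx. apply Hpos. lra.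
Qed.

Definition gauss_param_kernel t r := exp (- (t ^ 2 * (1 + r ^ 2))) / (1 + r ^ 2).
Definition gauss_param t := RInt (gauss_param_kernel t) 0 1.

Lemma Derive_gauss_param_kernel t r :
  Derive (fun u => gauss_param_kernel u r) t = -2 * exp (- t ^ 2) * (t * exp (- (t * r + 0) ^ 2)).
Proof.
  transitivity (-2 * t * exp (- (t ^ 2 * (1 + r ^ 2)))).
  - apply is_derive_unique. unfold gauss_param_kernel. auto_derive; [smooth |].
    unfold Rdiv. cbn [pow]. field. generalize (one_plus_sq_pos r). cbn [pow]. lra.
  - replace (- (t ^ 2 * (1 + r ^ 2))) with (- t ^ 2 + - (t * r + 0) ^ 2) by ring.
    rewrite exp_plus. ring.
Qed.

Lemma is_derive_gauss_param t : is_derive gauss_param t (-2 * exp (- t ^ 2) * gauss t).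
Proof.
  assert (E : @eq R (RInt (fun r => Derive (fun u => gauss_param_kernel u r) t) 0 1)
                    (-2 * exp (- t ^ 2) * gauss t)).
  { rewrite (RInt_ext (V := R_CompleteNormedModule) _ _ _ _
               (fun r _ => Derive_gauss_param_kernel t r)).
    rewrite RInt_scal_R by smooth. apply Rmult_eq_compat_l.
    (* the substitution u = t r *)
    rewrite (RInt_comp_lin (V := R_CompleteNormedModule) (fun u => exp (- u ^ 2))) by smooth.
    unfold gauss. f_equal; ring. }
  rewrite <- E. apply (is_derive_RInt_param gauss_param_kernel).
  - apply filter_forall. intros u r _. unfold gauss_param_kernel. smooth.
  - intros r _. eapply continuity_2d_pt_ext.
    { intros u v. symmetry. apply Derive_gauss_param_kernel. }
    continuity_2d.
  - apply filter_forall. intros u. unfold gauss_param_kernel. smooth.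
Qed.

#[global] Hint Extern 1 (is_derive gauss_param _ _) => simple apply is_derive_gauss_param : smooth.

Lemma gauss_param_0 : gauss_param 0 = PI / 4.
Proof.
  unfold gauss_param, gauss_param_kernel.
  rewrite (RInt_ext (V := R_CompleteNormedModule) _ (fun r => / (1 + r ^ 2))).
  - rewrite (RInt_derive atan), atan_1, atan_0; [lra | | smooth].
    intros x. apply is_derive_Reals, derivable_pt_lim_atan.
  - intros x _. replace (- (0 ^ 2 * (1 + x ^ 2))) with 0 by ring.
    rewrite exp_0. apply Rdiv_1_l.
Qed.

Lemma gauss_sq_plus_param t : gauss t ^ 2 + gauss_param t = PI / 4.
Proof.
  rewrite <- gauss_param_0.
  replace (gauss_param 0) with (gauss 0 ^ 2 + gauss_param 0) by (rewrite gauss_0; ring).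
  apply (eq_of_is_derive (fun t => gauss t ^ 2 + gauss_param t)
           (fun _ => gauss 0 ^ 2 + gauss_param 0) (fun _ => 0) 0);
    [| intros; auto_derive; reflexivity | reflexivity].
  intros x. auto_derive; [smooth | rewrite_Derive; ring].
Qed.

Lemma gauss_param_bounds t : 0 <= gauss_param t <= exp (- t ^ 2).
Proof.
  assert (Hex : ex_RInt (gauss_param_kernel t) 0 1) by (unfold gauss_param_kernel; smooth).
  unfold gauss_param. split.
  - apply RInt_ge_0; [lra | exact Hex |]. intros r _.
    apply Rdiv_le_0_compat; [left; apply exp_pos | apply one_plus_sq_pos].
  - apply Rle_trans with (RInt (fun _ => exp (- t ^ 2)) 0 1).
    + apply RInt_le; [lra | exact Hex | apply ex_RInt_const |].
      intros r _. unfold gauss_param_kernel.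
      apply Rle_trans with (exp (- (t ^ 2 * (1 + r ^ 2)))).
      * apply Rmult_le_reg_r with (1 + r ^ 2); [apply one_plus_sq_pos |].
        unfold Rdiv. rewrite Rmult_assoc, Rinv_l by apply one_plus_sq_neq_0.
        generalize (exp_pos (- (t ^ 2 * (1 + r ^ 2)))). nra.
      * apply exp_le_compat. nra.
    + rewrite RInt_const. change ((1 - 0) * exp (- t ^ 2) <= exp (- t ^ 2)). lra.
Qed.

Lemma sqrt_PI_sq : sqrt PI * sqrt PI = PI.
Proof. apply sqrt_sqrt. generalize PI_RGT_0. lra. Qed.

Lemma sqrt_PI_ge_1 : 1 <= sqrt PI.
Proof. rewrite <- sqrt_1. apply sqrt_le_1_alt. generalize PI2_1. lra. Qed.

Lemma Rabs_gauss_le_sqrt_PI t : Rabs (gauss t) <= sqrt PI / 2.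
Proof.
  assert (H := gauss_sq_plus_param t). assert (H2 := gauss_param_bounds t).
  assert (H3 := sqrt_PI_sq). assert (H4 := sqrt_PI_ge_1).
  apply Rabs_le. split; nra.
Qed.

Definition gauss_tail x := sqrt PI / 2 - gauss x.

Lemma is_derive_gauss_tail x : is_derive gauss_tail x (- exp (- x ^ 2)).
Proof. unfold gauss_tail. auto_derive; [smooth | rewrite_Derive; ring]. Qed.

#[global] Hint Extern 1 (is_derive gauss_tail _ _) => simple apply is_derive_gauss_tail : smooth.

Lemma gauss_tail_opp x : gauss_tail (- x) = gauss x + sqrt PI / 2.
Proof. unfold gauss_tail. rewrite gauss_opp. ring. Qed.

Lemma gauss_tail_le a b : a <= b -> gauss_tail b <= gauss_tail a.
Proof. intros Hab. unfold gauss_tail. generalize (gauss_le a b Hab). lra. Qed.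

Lemma gauss_tail_bounds x : 0 <= x -> 0 <= gauss_tail x <= 2 * exp (- x ^ 2).
Proof.
  intros Hx. unfold gauss_tail.
  assert (H := gauss_sq_plus_param x). assert (H2 := gauss_param_bounds x).
  assert (H3 := sqrt_PI_sq). assert (H4 := sqrt_PI_ge_1).
  assert (H5 : 0 <= gauss x) by (rewrite <- gauss_0; apply gauss_le, Hx).
  assert (H6 := Rabs_gauss_le_sqrt_PI x). apply Rabs_le_between in H6.
  split; [lra |].
  assert ((sqrt PI / 2 - gauss x) * (sqrt PI / 2 + gauss x) <= exp (- x ^ 2)) by nra.
  nra.
Qed.

(** * The formula for [chi 1] *)

Lemma RInt_gen_gauss y :
  RInt_gen (fun u => exp (- u ^ 2) * chi 0 u) (Rbar_locally m_infty) (at_point y)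
  = gauss y + sqrt PI / 2.
Proof.
  replace (gauss y + sqrt PI / 2) with (gauss y - - (sqrt PI / 2)) by ring.
  cbn [chi]. apply RInt_gen_m_infty.
  - intros x. rewrite Rmult_1_r. apply is_derive_gauss.
  - smooth.
  - apply (is_lim_m_infty_of_abs_le _ _ 2). intros a Ha.
    replace (gauss a - - (sqrt PI / 2)) with (gauss_tail (- a)) by (rewrite gauss_tail_opp; ring).
    destruct (gauss_tail_bounds (- a)) as [H1 H2]; [lra |].
    rewrite Rabs_pos_eq by exact H1. eapply Rle_trans; [exact H2 |].
    apply Rmult_le_compat_l; [lra |]. apply exp_neg_sq_le_inv. lra.
Qed.

Lemma chi_1_RInt z : chi 1 z = 2 * RInt (fun y => exp (y ^ 2) * (gauss y + sqrt PI / 2)) 0 z.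
Proof.
  cbn [chi]. apply Rmult_eq_compat_l, (RInt_ext (V := R_CompleteNormedModule)).
  intros y _. rewrite RInt_gen_gauss. reflexivity.
Qed.

(* Otherwise [auto_derive] unfolds [chi 1] into its defining integral. *)
Arguments chi : simpl never.

Lemma is_derive_phi1 x : is_derive phi1 x (exp (x ^ 2)).
Proof. apply (is_derive_RInt_upper (fun t => exp (t ^ 2))). smooth. Qed.

Lemma is_derive_psi1 x : is_derive psi1 x (2 * (exp (x ^ 2) * gauss x)).
Proof. apply is_derive_scal, (is_derive_RInt_upper (fun t => exp (t ^ 2) * gauss t)). smooth. Qed.

#[global] Hint Extern 1 (is_derive phi1 _ _) => simple apply is_derive_phi1 : smooth.
#[global] Hint Extern 1 (is_derive psi1 _ _) => simple apply is_derive_psi1 : smooth.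

Lemma chi_1_eq z : chi 1 z = sqrt PI * phi1 z + psi1 z.
Proof.
  rewrite chi_1_RInt. revert z.
  apply (eq_of_is_derive _ _ (fun z => 2 * (exp (z ^ 2) * (gauss z + sqrt PI / 2))) 0).
  - intros z. auto_derive; [smooth | cbn [pow]; ring].
  - intros z. auto_derive; [smooth | rewrite_Derive; cbn [pow]; field].
  - unfold phi1, psi1. rewrite !(RInt_point (V := R_CompleteNormedModule)).
    change (2 * 0 = sqrt PI * 0 + 2 * 0). ring.
Qed.

Lemma is_derive_chi_1 x : is_derive (chi 1) x (2 * exp (x ^ 2) * (gauss x + sqrt PI / 2)).
Proof.
  apply (is_derive_ext_R (fun z => sqrt PI * phi1 z + psi1 z));
    [intros; symmetry; apply chi_1_eq |].
  auto_derive; [smooth | rewrite_Derive; field].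
Qed.

#[global] Hint Extern 1 (is_derive (chi 1) _ _) => simple apply is_derive_chi_1 : smooth.

Lemma chi_1_0 : chi 1 0 = 0.
Proof.
  rewrite chi_1_eq. unfold phi1, psi1. rewrite !(RInt_point (V := R_CompleteNormedModule)).
  change (sqrt PI * 0 + 2 * 0 = 0). ring.
Qed.

(** * Craig's formula and the integral of [exp (t ^ 2) * gauss_tail t ^ 2] *)

(* At [r = 0] this is [0], because [/ 0 = 0]: for [x <> 0] it is the continuous extension. *)
Definition tail_kernel x r := exp (- (x / r) ^ 2) / r ^ 2.

(* [exp (- (x / r) ^ 2) / (1 + r ^ 2)] for [r <> 0], and [0] at [r = 0]. *)
Definition craig_kernel x r := r ^ 2 / (1 + r ^ 2) * tail_kernel x r.

Definition craig_prim_kernel x r := r * gauss (x / r) / (1 + r ^ 2).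

Lemma tail_kernel_0 x : tail_kernel x 0 = 0.
Proof. unfold tail_kernel. replace (0 ^ 2) with 0 by ring. apply Rdiv_0_r. Qed.

Lemma craig_kernel_eq x r : r <> 0 -> craig_kernel x r = exp (- (x / r) ^ 2) / (1 + r ^ 2).
Proof.
  intros Hr. unfold craig_kernel, tail_kernel. field.
  split; [apply one_plus_sq_neq_0 | exact Hr].
Qed.

Lemma tail_kernel_bounds x r : x <> 0 -> 0 <= tail_kernel x r <= 4 / x ^ 4 * r ^ 2.
Proof.
  intros Hx.
  assert (Hx4 : 0 < x ^ 4)
    by (replace (x ^ 4) with ((x ^ 2) ^ 2) by ring; apply pow_lt, pow2_gt_0, Hx).
  assert (H4 : 0 <= 4 / x ^ 4 * r ^ 2)
    by (apply Rmult_le_pos; [apply Rdiv_le_0_compat; lra | apply pow2_ge_0]).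
  destruct (Req_dec r 0) as [-> | Hr]; [rewrite tail_kernel_0; lra |].
  assert (Hr2 := pow2_gt_0 r Hr).
  assert (Hxr : 0 < (x / r) ^ 2).
  { apply pow2_gt_0. unfold Rdiv. apply Rmult_integral_contrapositive.
    split; [exact Hx | apply Rinv_neq_0_compat, Hr]. }
  unfold tail_kernel. split.
  - apply Rdiv_le_0_compat; [left; apply exp_pos | exact Hr2].
  - apply Rle_trans with (4 / ((x / r) ^ 2) ^ 2 / r ^ 2).
    + unfold Rdiv at 1 3. apply Rmult_le_compat_r; [left; apply Rinv_0_lt_compat, Hr2 |].
      apply exp_neg_le_inv_sq, Hxr.
    + right. field. split; [exact Hx | exact Hr].
Qed.

Lemma craig_kernel_bounds x r : 0 <= craig_kernel x r <= 1.
Proof.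
  destruct (Req_dec r 0) as [-> | Hr].
  - unfold craig_kernel. rewrite tail_kernel_0, Rmult_0_r. lra.
  - rewrite craig_kernel_eq by exact Hr.
    assert (H1 := exp_pos (- (x / r) ^ 2)).
    assert (H2 : exp (- (x / r) ^ 2) <= 1) by (rewrite <- exp_0; apply exp_le_compat; nra).
    assert (H3 := one_plus_sq_pos r).
    split; [apply Rdiv_le_0_compat; lra |].
    apply Rmult_le_reg_r with (1 + r ^ 2); [exact H3 |].
    unfold Rdiv. rewrite Rmult_assoc, Rinv_l by lra. nra.
Qed.

Lemma is_derive_craig_kernel x r :
  is_derive (fun z => craig_kernel z r) x (-2 * x * (tail_kernel x r - craig_kernel x r)).
Proof.
  destruct (Req_dec r 0) as [-> | Hr].
  - apply (is_derive_ext_R (fun _ => 0)).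
    + intros z. unfold craig_kernel. rewrite tail_kernel_0. ring.
    + unfold craig_kernel. rewrite tail_kernel_0. auto_derive; [exact I | ring].
  - apply (is_derive_ext_R (fun z => exp (- (z / r) ^ 2) / (1 + r ^ 2))).
    + intros z. symmetry. apply craig_kernel_eq, Hr.
    + auto_derive; [smooth |]. rewrite craig_kernel_eq by exact Hr. unfold tail_kernel, Rdiv.
      cbn [pow]. field. split; [nra | exact Hr].
Qed.

Lemma is_derive_craig_prim_kernel x r :
  is_derive (fun z => craig_prim_kernel z r) x (craig_kernel x r).
Proof.
  destruct (Req_dec r 0) as [-> | Hr].
  - apply (is_derive_ext_R (fun _ => 0)).
    + intros z. unfold craig_prim_kernel, Rdiv. ring.
    + unfold craig_kernel. rewrite tail_kernel_0. auto_derive; [exact I | ring].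
  - unfold craig_prim_kernel. auto_derive; [smooth |].
    rewrite_Derive. rewrite craig_kernel_eq by exact Hr.
    unfold Rdiv. cbn [pow]. field. split; [nra | exact Hr].
Qed.

Lemma continuity_2d_pt_tail_kernel x t : 0 < x -> continuity_2d_pt tail_kernel x t.
Proof.
  intros Hx. destruct (Req_dec t 0) as [-> | Ht].
  - apply (continuity_2d_pt_vanishing _ _ (64 / x ^ 4)).
    exists (mkposreal _ (Rmin_pos _ _ (Rdiv_lt_0_compat _ _ Hx Rlt_0_2) Rlt_0_1)).
    intros u v Hu Hv. simpl in Hu, Hv. rewrite Rminus_0_r in Hv.
    assert (Hu1 : Rabs (u - x) < x / 2) by (eapply Rlt_le_trans; [exact Hu | apply Rmin_l]).
    assert (Hv1 : Rabs v < 1) by (eapply Rlt_le_trans; [exact Hv | apply Rmin_r]).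
    apply Rabs_def2 in Hu1.
    destruct (tail_kernel_bounds u v) as [H1 H2]; [lra |].
    rewrite Rabs_pos_eq by exact H1. eapply Rle_trans; [exact H2 |].
    assert (Hv2 : v ^ 2 <= Rabs v)
      by (rewrite <- Rsqr_pow2, Rsqr_abs, Rsqr_pow2; generalize (Rabs_pos v); nra).
    assert (Hxu : (x / 2) ^ 4 <= u ^ 4) by (apply pow_incr; lra).
    assert (Hx4 : 0 < (x / 2) ^ 4) by (apply pow_lt; lra).
    apply Rmult_le_compat; [apply Rdiv_le_0_compat; lra | apply pow2_ge_0 | | exact Hv2].
    replace (64 / x ^ 4) with (4 / (x / 2) ^ 4) by (field; lra).
    unfold Rdiv. apply Rmult_le_compat_l; [lra |]. apply Rinv_le_contravar; lra.
  - unfold tail_kernel. continuity_2d; [exact Ht | exact Ht |].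
    generalize (pow2_gt_0 t Ht). cbn [pow]. lra.
Qed.

Lemma continuity_2d_pt_craig_kernel x t : 0 < x -> continuity_2d_pt craig_kernel x t.
Proof.
  intros Hx. unfold craig_kernel.
  apply continuity_2d_pt_mult; [| apply continuity_2d_pt_tail_kernel, Hx].
  continuity_2d. generalize (one_plus_sq_pos t). cbn [pow]. lra.
Qed.

Lemma continuity_2d_pt_craig_prim_kernel x t : continuity_2d_pt craig_prim_kernel x t.
Proof.
  destruct (Req_dec t 0) as [-> | Ht].
  - apply (continuity_2d_pt_vanishing _ _ (sqrt PI / 2)).
    exists (mkposreal _ Rlt_0_1). intros u v _ _. unfold craig_prim_kernel, Rdiv.
    rewrite !Rabs_mult, Rabs_inv, (Rabs_pos_eq (1 + v ^ 2)) by (left; apply one_plus_sq_pos).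
    assert (H1 := Rabs_gauss_le_sqrt_PI (u * / v)).
    assert (H2 : / (1 + v ^ 2) <= 1)
      by (rewrite <- Rinv_1; apply Rinv_le_contravar; [lra | generalize (pow2_ge_0 v); lra]).
    apply Rle_trans with (Rabs v * Rabs (gauss (u * / v)) * 1).
    + apply Rmult_le_compat_l; [apply Rmult_le_pos; apply Rabs_pos | exact H2].
    + rewrite Rmult_1_r, (Rmult_comm (sqrt PI / 2)).
      apply Rmult_le_compat_l; [apply Rabs_pos | exact H1].
  - unfold craig_prim_kernel. continuity_2d; [exact Ht |].
    generalize (one_plus_sq_pos t). cbn [pow]. lra.
Qed.

Lemma ex_RInt_tail_kernel x a b : 0 < x -> ex_RInt (tail_kernel x) a b.
Proof.
  intros Hx. apply (ex_RInt_continuous (V := R_CompleteNormedModule)). intros r _.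
  apply continuous_of_continuity_2d_pt, continuity_2d_pt_tail_kernel, Hx.
Qed.

Lemma ex_RInt_craig_kernel x a b : 0 < x -> ex_RInt (craig_kernel x) a b.
Proof.
  intros Hx. apply (ex_RInt_continuous (V := R_CompleteNormedModule)). intros r _.
  apply continuous_of_continuity_2d_pt, continuity_2d_pt_craig_kernel, Hx.
Qed.

Lemma ex_RInt_craig_prim_kernel x a b : ex_RInt (craig_prim_kernel x) a b.
Proof.
  apply (ex_RInt_continuous (V := R_CompleteNormedModule)). intros r _.
  apply continuous_of_continuity_2d_pt, continuity_2d_pt_craig_prim_kernel.
Qed.

(* The substitution s = x / r turns this into an integral of [exp (- s ^ 2)]. *)
Lemma RInt_tail_kernel_from x a :
  0 < x -> 0 < a -> RInt (tail_kernel x) a 1 = gauss_tail x / x - gauss_tail (x / a) / x.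
Proof.
  intros Hx Ha.
  replace (gauss_tail x / x) with (gauss_tail (x / 1) / x) by (rewrite Rdiv_1_r; reflexivity).
  apply is_RInt_unique, (is_RInt_derive (fun r => gauss_tail (x / r) / x)).
  - intros r Hr. assert (Hr0 : 0 < r) by (generalize (Rmin_glb_lt a 1 0 Ha Rlt_0_1); lra).
    auto_derive; [smooth; lra |].
    rewrite_Derive. unfold tail_kernel, Rdiv. cbn [pow]. field. lra.
  - intros r _. apply continuous_of_continuity_2d_pt, continuity_2d_pt_tail_kernel, Hx.
Qed.

Lemma RInt_tail_kernel x : 0 < x -> RInt (tail_kernel x) 0 1 = gauss_tail x / x.
Proof.
  intros Hx. assert (Hx4 : 0 < x ^ 4) by (apply pow_lt, Hx).
  apply Rminus_diag_uniq, (eq_0_of_abs_le_small _ (4 / x ^ 4 + 2 / x ^ 3)). intros a Ha.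
  rewrite <- (RInt_Chasles (V := R_CompleteNormedModule) _ 0 a 1) by apply ex_RInt_tail_kernel, Hx.
  change (plus ?u ?v) with (u + v). rewrite RInt_tail_kernel_from by lra.
  match goal with |- Rabs ?e <= _ =>
    replace e with (RInt (tail_kernel x) 0 a - gauss_tail (x / a) / x) by ring end.
  eapply Rle_trans; [apply Rabs_triang |]. rewrite Rabs_Ropp, Rmult_plus_distr_r.
  apply Rplus_le_compat.
  - eapply Rle_trans.
    + apply abs_RInt_le_const with (M := 4 / x ^ 4); [lra | apply ex_RInt_tail_kernel, Hx |].
      intros r Hr. destruct (tail_kernel_bounds x r) as [H1 H2]; [lra |].
      rewrite Rabs_pos_eq by exact H1. eapply Rle_trans; [exact H2 |].
      rewrite <- (Rmult_1_r (4 / x ^ 4)) at 2.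
      apply Rmult_le_compat_l; [apply Rdiv_le_0_compat; lra | nra].
    + lra.
  - assert (Hxa : 0 < x / a) by (apply Rdiv_lt_0_compat; lra).
    destruct (gauss_tail_bounds (x / a)) as [H1 H2]; [lra |].
    assert (H3 := exp_neg_le_inv _ (pow_lt _ 2 Hxa)).
    unfold Rdiv at 1.
    rewrite Rabs_mult, Rabs_pos_eq, Rabs_pos_eq by (try (left; apply Rinv_0_lt_compat); lra).
    replace (/ (x / a) ^ 2) with (a ^ 2 / x ^ 2) in H3 by (field; lra).
    apply Rle_trans with (2 * (a ^ 2 / x ^ 2) * / x).
    + apply Rmult_le_compat_r; [left; apply Rinv_0_lt_compat |]; lra.
    + replace (2 * (a ^ 2 / x ^ 2) * / x) with (2 / x ^ 3 * a * a) by (field; lra).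
      assert (0 < 2 / x ^ 3) by (apply Rdiv_lt_0_compat; [lra | apply pow_lt, Hx]).
      rewrite <- (Rmult_1_r (2 / x ^ 3 * a)) at 2.
      apply Rmult_le_compat_l; [apply Rmult_le_pos |]; lra.
Qed.

Definition craig x := RInt (craig_kernel x) 0 1.

Lemma is_derive_craig x : 0 < x -> is_derive craig x (2 * x * craig x - 2 * gauss_tail x).
Proof.
  intros Hx.
  assert (E : @eq R (RInt (fun r => Derive (fun z => craig_kernel z r) x) 0 1)
                    (2 * x * craig x - 2 * gauss_tail x)).
  { rewrite (RInt_ext (V := R_CompleteNormedModule) _
               (fun r => -2 * x * (tail_kernel x r - craig_kernel x r)))
      by (intros r _; apply is_derive_unique, is_derive_craig_kernel).
    assert (Ht := ex_RInt_tail_kernel x 0 1 Hx). assert (Hc := ex_RInt_craig_kernel x 0 1 Hx).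
    rewrite RInt_scal_R, RInt_minus_R, RInt_tail_kernel
      by first [ exact Hx | exact Ht | exact Hc
               | apply (ex_RInt_minus (V := R_NormedModule)); assumption ].
    unfold craig. field. lra. }
  rewrite <- E. apply (is_derive_RInt_param craig_kernel).
  - apply filter_forall. intros z r _. eexists. apply is_derive_craig_kernel.
  - intros r _.
    apply (continuity_2d_pt_ext (fun u v => -2 * u * (tail_kernel u v - craig_kernel u v))).
    { intros u v. symmetry. apply is_derive_unique, is_derive_craig_kernel. }
    apply continuity_2d_pt_mult;
      [apply continuity_2d_pt_mult; [apply continuity_2d_pt_const | apply continuity_2d_pt_id1] |].
    apply continuity_2d_pt_minus;
      [apply continuity_2d_pt_tail_kernel | apply continuity_2d_pt_craig_kernel]; exact Hx.
  - generalize (locally_pos x Hx). apply filter_imp. intros y Hy. apply ex_RInt_craig_kernel, Hy.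
Qed.

Lemma craig_bounds x : 0 < x -> 0 <= craig x <= 1.
Proof.
  intros Hx. assert (Hex := ex_RInt_craig_kernel x 0 1 Hx). unfold craig. split.
  - apply RInt_ge_0; [lra | exact Hex |]. intros r _. apply craig_kernel_bounds.
  - apply Rle_trans with (RInt (fun _ => 1) 0 1).
    + apply RInt_le; [lra | exact Hex | apply ex_RInt_const |].
      intros r _. apply craig_kernel_bounds.
    + rewrite RInt_const. change ((1 - 0) * 1 <= 1). lra.
Qed.

(* [exp (- y ^ 2) * craig y - gauss_tail y ^ 2] is constant on (0, +oo) and tends to 0. *)
Lemma craig_eq x : 0 < x -> craig x = exp (x ^ 2) * gauss_tail x ^ 2.
Proof.
  intros Hx. set (Y y := exp (- y ^ 2) * craig y - gauss_tail y ^ 2).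
  assert (HY' : forall y, 0 < y -> is_derive Y y 0).
  { intros y Hy. unfold Y. auto_derive.
    - split; [eexists; apply is_derive_craig, Hy | smooth].
    - rewrite (Derive_of_is_derive _ _ _ (is_derive_craig y Hy)). rewrite_Derive.
      cbn [pow]. ring. }
  assert (HYb : forall y, 0 < y -> Rabs (Y y) <= 5 * exp (- y ^ 2)).
  { intros y Hy. unfold Y.
    destruct (craig_bounds y Hy) as [H1 H2]. destruct (gauss_tail_bounds y) as [H3 H4]; [lra |].
    assert (H5 := exp_pos (- y ^ 2)).
    assert (H6 : exp (- y ^ 2) <= 1) by (rewrite <- exp_0; apply exp_le_compat; nra).
    apply Rabs_le. split; nra. }
  assert (HY0 : Y x = 0).
  { apply (eq_0_of_abs_le_inv _ 5). intros y Hy. set (m := Rmax x y).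
    assert (Hxm : x <= m) by apply Rmax_l. assert (Hym : y <= m) by apply Rmax_r.
    rewrite (is_derive_0_eq Y x m Hxm) by (intros z Hz; apply HY'; lra).
    eapply Rle_trans; [apply HYb; lra |].
    apply Rle_trans with (5 / m).
    - apply Rmult_le_compat_l; [lra |]. apply exp_neg_sq_le_inv. lra.
    - apply Rmult_le_compat_l; [lra |]. apply Rinv_le_contravar; lra. }
  unfold Y in HY0. apply (Rmult_eq_compat_l (exp (x ^ 2))) in HY0.
  rewrite Rmult_minus_distr_l, <- Rmult_assoc, <- exp_plus, Rplus_opp_r, exp_0, Rmult_0_r,
    Rmult_1_l in HY0.
  lra.
Qed.

Definition craig_prim x := RInt (craig_prim_kernel x) 0 1.

Lemma is_derive_craig_prim x : 0 < x -> is_derive craig_prim x (craig x).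
Proof.
  intros Hx. unfold craig.
  rewrite <- (RInt_ext (V := R_CompleteNormedModule)
                (fun r => Derive (fun z => craig_prim_kernel z r) x))
    by (intros r _; apply is_derive_unique, is_derive_craig_prim_kernel).
  apply (is_derive_RInt_param craig_prim_kernel).
  - apply filter_forall. intros z r _. eexists. apply is_derive_craig_prim_kernel.
  - intros r _. apply (continuity_2d_pt_ext craig_kernel).
    + intros u v. symmetry. apply is_derive_unique, is_derive_craig_prim_kernel.
    + apply continuity_2d_pt_craig_kernel, Hx.
  - apply filter_forall. intros y. apply ex_RInt_craig_prim_kernel.
Qed.

Lemma Rabs_craig_prim_kernel_le x r : Rabs (craig_prim_kernel x r) <= Rabs x.
Proof.
  unfold craig_prim_kernel. destruct (Req_dec r 0) as [-> | Hr].
  - rewrite Rmult_0_l, Rdiv_0_l, Rabs_R0. apply Rabs_pos.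
  - unfold Rdiv.
    rewrite !Rabs_mult, Rabs_inv, (Rabs_pos_eq (1 + r ^ 2)) by (left; apply one_plus_sq_pos).
    assert (H1 := Rabs_gauss_le (x * / r)). rewrite Rabs_mult, Rabs_inv in H1.
    assert (H2 : / (1 + r ^ 2) <= 1)
      by (rewrite <- Rinv_1; apply Rinv_le_contravar; [lra | generalize (pow2_ge_0 r); lra]).
    assert (Hr' : 0 < Rabs r) by (apply Rabs_pos_lt, Hr).
    apply Rle_trans with (Rabs r * (Rabs x * / Rabs r) * 1).
    + apply Rmult_le_compat; [apply Rmult_le_pos; apply Rabs_pos | | | exact H2].
      * left. apply Rinv_0_lt_compat, one_plus_sq_pos.
      * apply Rmult_le_compat_l; [apply Rabs_pos | exact H1].
    + right. field. lra.
Qed.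

Lemma Rabs_craig_prim_le x : 0 <= x -> Rabs (craig_prim x) <= x.
Proof.
  intros Hx. eapply Rle_trans.
  - apply abs_RInt_le_const with (M := Rabs x); [lra | apply ex_RInt_craig_prim_kernel |].
    intros r _. apply Rabs_craig_prim_kernel_le.
  - rewrite Rabs_pos_eq by exact Hx. lra.
Qed.

Definition tail_sq_prim x := RInt (fun t => exp (t ^ 2) * gauss_tail t ^ 2) 0 x.

Lemma is_derive_tail_sq_prim x : is_derive tail_sq_prim x (exp (x ^ 2) * gauss_tail x ^ 2).
Proof. apply (is_derive_RInt_upper (fun t => exp (t ^ 2) * gauss_tail t ^ 2)). smooth. Qed.

#[global] Hint Extern 1 (is_derive tail_sq_prim _ _) =>
  simple apply is_derive_tail_sq_prim : smooth.

Lemma exp_sq_gauss_tail_sq_le t : 0 <= t -> 0 <= exp (t ^ 2) * gauss_tail t ^ 2 <= 4.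
Proof.
  intros Ht. destruct (gauss_tail_bounds t Ht) as [H1 H2].
  assert (H3 : exp (t ^ 2) * exp (- t ^ 2) = 1) by (rewrite <- exp_plus, Rplus_opp_r; apply exp_0).
  assert (H4 := exp_pos (t ^ 2)).
  assert (H5 : exp (- t ^ 2) <= 1) by (rewrite <- exp_0; apply exp_le_compat; nra).
  split; [apply Rmult_le_pos; [lra | apply pow2_ge_0] |].
  apply Rle_trans with (exp (t ^ 2) * (gauss_tail t * (2 * exp (- t ^ 2)))).
  - apply Rmult_le_compat_l; [lra |].
    replace (gauss_tail t ^ 2) with (gauss_tail t * gauss_tail t) by ring.
    apply Rmult_le_compat_l; lra.
  - replace (exp (t ^ 2) * (gauss_tail t * (2 * exp (- t ^ 2))))
      with (2 * gauss_tail t * (exp (t ^ 2) * exp (- t ^ 2))) by ring.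
    rewrite H3. nra.
Qed.

Lemma Rabs_tail_sq_prim_le a : 0 <= a -> Rabs (tail_sq_prim a) <= 4 * a.
Proof.
  intros Ha. eapply Rle_trans.
  - apply abs_RInt_le_const with (M := 4); [exact Ha | smooth |].
    intros t Ht. rewrite Rabs_pos_eq; apply exp_sq_gauss_tail_sq_le; lra.
  - lra.
Qed.

(* Both sides have derivative [craig] on (0, +oo), by Craig's formula, and vanish at 0. *)
Lemma tail_sq_prim_eq x : 0 < x -> tail_sq_prim x = craig_prim x.
Proof.
  intros Hx. apply Rminus_diag_uniq, (eq_0_of_abs_le_small _ 5). intros a Ha.
  set (b := Rmin a x).
  assert (Hb : 0 < b) by (apply Rmin_pos; lra).
  assert (Hba : b <= a) by apply Rmin_l. assert (Hbx : b <= x) by apply Rmin_r.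
  rewrite <- (is_derive_0_eq (fun y => tail_sq_prim y - craig_prim y) b x Hbx).
  - eapply Rle_trans; [apply Rabs_triang |]. rewrite Rabs_Ropp.
    generalize (Rabs_tail_sq_prim_le b (Rlt_le _ _ Hb)) (Rabs_craig_prim_le b (Rlt_le _ _ Hb)).
    lra.
  - intros y Hy. replace 0 with (exp (y ^ 2) * gauss_tail y ^ 2 - craig y)
      by (rewrite craig_eq by lra; ring).
    apply (is_derive_minus tail_sq_prim craig_prim);
      [apply is_derive_tail_sq_prim | apply is_derive_craig_prim; lra].
Qed.

Lemma RInt_ln_kernel : RInt (fun r => r / (1 + r ^ 2)) 0 1 = ln 2 / 2.
Proof.
  rewrite (RInt_derive (fun r => ln (1 + r ^ 2) / 2)); [| | smooth].
  - change (ln (1 + 1 ^ 2) / 2 - ln (1 + 0 ^ 2) / 2 = ln 2 / 2).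
    replace (1 + 1 ^ 2) with 2 by ring. replace (1 + 0 ^ 2) with 1 by ring.
    rewrite ln_1. field.
  - intros x. auto_derive; [apply one_plus_sq_pos |]. field. apply one_plus_sq_neq_0.
Qed.

Lemma Rabs_craig_prim_sub_le X : 0 < X -> Rabs (craig_prim X - sqrt PI * ln 2 / 4) <= gauss_tail X.
Proof.
  intros HX.
  replace (sqrt PI * ln 2 / 4) with (sqrt PI / 2 * RInt (fun r => r / (1 + r ^ 2)) 0 1)
    by (rewrite RInt_ln_kernel; field).
  assert (Hln : ex_RInt (fun r => r / (1 + r ^ 2)) 0 1) by smooth.
  assert (Hsc := ex_RInt_scal (V := R_NormedModule) _ _ _ (sqrt PI / 2) Hln).
  assert (Hv := ex_RInt_craig_prim_kernel X 0 1).
  unfold craig_prim. rewrite <- RInt_scal_R, <- RInt_minus_R by assumption.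
  destruct (gauss_tail_bounds X) as [H1 H2]; [lra |].
  eapply Rle_trans; [apply abs_RInt_le_const with (M := gauss_tail X) | lra].
  - lra.
  - apply (ex_RInt_minus (V := R_NormedModule)); assumption.
  - intros r Hr.
    replace (craig_prim_kernel X r - sqrt PI / 2 * (r / (1 + r ^ 2)))
      with (- (r / (1 + r ^ 2) * gauss_tail (X / r)))
      by (unfold craig_prim_kernel, gauss_tail; field; apply one_plus_sq_neq_0).
    rewrite Rabs_Ropp. destruct (Req_dec r 0) as [-> | Hr0].
    + rewrite Rdiv_0_l, Rmult_0_l, Rabs_R0. exact H1.
    + assert (Hrpos : 0 < r) by lra.
      destruct (gauss_tail_bounds (X / r)) as [H3 _]; [apply Rdiv_le_0_compat; lra |].
      assert (H4 : gauss_tail (X / r) <= gauss_tail X).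
      { apply gauss_tail_le. apply (Rmult_le_reg_r r); [exact Hrpos |].
        unfold Rdiv. rewrite Rmult_assoc, Rinv_l by lra. nra. }
      assert (H5 : 0 <= r / (1 + r ^ 2) <= 1).
      { split; [apply Rdiv_le_0_compat; [lra | apply one_plus_sq_pos] |].
        apply (Rmult_le_reg_r (1 + r ^ 2)); [apply one_plus_sq_pos |].
        unfold Rdiv. rewrite Rmult_assoc, Rinv_l by apply one_plus_sq_neq_0. nra. }
      rewrite Rabs_mult, !Rabs_pos_eq by lra. nra.
Qed.

Lemma Rabs_tail_sq_prim_sub_le X :
  0 < X -> Rabs (tail_sq_prim X - sqrt PI * ln 2 / 4) <= 2 * exp (- X ^ 2).
Proof.
  intros HX. rewrite tail_sq_prim_eq by exact HX.
  eapply Rle_trans; [apply Rabs_craig_prim_sub_le, HX | apply gauss_tail_bounds; lra].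
Qed.

(** * The formula for [chi 2] *)

Definition chi_1_gauss_prim u := RInt (fun v => exp (- v ^ 2) * chi 1 v) 0 u.

Lemma is_derive_chi_1_gauss_prim x : is_derive chi_1_gauss_prim x (exp (- x ^ 2) * chi 1 x).
Proof. apply (is_derive_RInt_upper (fun v => exp (- v ^ 2) * chi 1 v)). smooth. Qed.

#[global] Hint Extern 1 (is_derive chi_1_gauss_prim _ _) =>
  simple apply is_derive_chi_1_gauss_prim : smooth.

(* Integration by parts, with [gauss u + sqrt PI / 2 = gauss_tail (- u)]. *)
Lemma chi_1_gauss_prim_eq u :
  chi_1_gauss_prim u = (gauss u + sqrt PI / 2) * chi 1 u + 2 * tail_sq_prim (- u).
Proof.
  revert u. apply (eq_of_is_derive _ _ (fun x => exp (- x ^ 2) * chi 1 x) 0).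
  - apply is_derive_chi_1_gauss_prim.
  - intros x. auto_derive; [smooth |]. rewrite_Derive. rewrite gauss_tail_opp.
    replace ((- x) ^ 2) with (x ^ 2) by ring. cbn [pow]. ring.
  - unfold chi_1_gauss_prim, tail_sq_prim.
    rewrite Ropp_0, chi_1_0, !(RInt_point (V := R_CompleteNormedModule)).
    change (0 = (gauss 0 + sqrt PI / 2) * 0 + 2 * 0). ring.
Qed.

Lemma Rabs_chi_1_le a : a <= 0 -> Rabs (chi 1 a) <= 4 * - a.
Proof.
  intros Ha. rewrite chi_1_RInt.
  rewrite <- (opp_RInt_swap (V := R_CompleteNormedModule)) by smooth.
  change (Rabs (2 * - RInt (fun y => exp (y ^ 2) * (gauss y + sqrt PI / 2)) a 0) <= 4 * - a).
  rewrite Rabs_mult, Rabs_Ropp, (Rabs_pos_eq 2) by lra.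
  replace (4 * - a) with (2 * ((0 - a) * 2)) by ring.
  apply Rmult_le_compat_l; [lra |].
  apply abs_RInt_le_const; [exact Ha | smooth |]. intros t Ht.
  rewrite <- gauss_tail_opp. destruct (gauss_tail_bounds (- t)) as [H1 H2]; [lra |].
  assert (H3 : exp (t ^ 2) * exp (- (- t) ^ 2) = 1)
    by (rewrite exp_neg_sq_opp, <- exp_plus, Rplus_opp_r; apply exp_0).
  rewrite Rabs_mult, !Rabs_pos_eq by (try apply Rlt_le, exp_pos; exact H1).
  assert (H4 := exp_pos (t ^ 2)). nra.
Qed.

Lemma Rabs_chi_1_gauss_prim_sub_le a :
  a <= -1 -> Rabs (chi_1_gauss_prim a - sqrt PI * ln 2 / 2) <= 12 / - a.
Proof.
  intros Ha. rewrite chi_1_gauss_prim_eq, <- gauss_tail_opp.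
  replace (gauss_tail (- a) * chi 1 a + 2 * tail_sq_prim (- a) - sqrt PI * ln 2 / 2)
    with (gauss_tail (- a) * chi 1 a + 2 * (tail_sq_prim (- a) - sqrt PI * ln 2 / 4)) by field.
  eapply Rle_trans; [apply Rabs_triang |]. rewrite !Rabs_mult, (Rabs_pos_eq 2) by lra.
  destruct (gauss_tail_bounds (- a)) as [H1 H2]; [lra |].
  rewrite (Rabs_pos_eq (gauss_tail (- a))) by exact H1.
  assert (HW := Rabs_tail_sq_prim_sub_le (- a) ltac:(lra)).
  assert (Hchi := Rabs_chi_1_le a ltac:(lra)).
  assert (He1 : exp (- (- a) ^ 2) <= / (- a) ^ 2) by (apply exp_neg_le_inv; nra).
  assert (He2 : exp (- (- a) ^ 2) <= / - a) by (apply exp_neg_sq_le_inv; lra).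
  assert (Hinv : (- a) * / (- a) ^ 2 = / - a) by (field; lra).
  assert (H0 := exp_pos (- (- a) ^ 2)). assert (H0' := Rabs_pos (chi 1 a)).
  apply Rle_trans with (2 * exp (- (- a) ^ 2) * (4 * - a) + 2 * (2 * exp (- (- a) ^ 2))).
  - apply Rplus_le_compat; [apply Rmult_le_compat; lra | lra].
  - assert (H8 : - a * exp (- (- a) ^ 2) <= / - a).
    { rewrite <- Hinv. apply Rmult_le_compat_l; lra. }
    unfold Rdiv. lra.
Qed.

Lemma chi_2_RInt z :
  chi 2 z = 2 * RInt (fun y => exp (y ^ 2) * (chi_1_gauss_prim y - sqrt PI * ln 2 / 2)) 0 z.
Proof.
  change (chi 2 z) with (2 * RInt (fun y => exp (y ^ 2) *
    RInt_gen (fun u => exp (- u ^ 2) * chi 1 u) (Rbar_locally m_infty) (at_point y)) 0 z).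
  apply Rmult_eq_compat_l, (RInt_ext (V := R_CompleteNormedModule)).
  intros y _. f_equal. apply RInt_gen_m_infty.
  - apply is_derive_chi_1_gauss_prim.
  - smooth.
  - apply (is_lim_m_infty_of_abs_le _ _ 12), Rabs_chi_1_gauss_prim_sub_le.
Qed.

Definition phi2_inner t := RInt (fun u => exp (- u ^ 2) * phi1 u) 0 t.
Definition psi2_inner t :=
  RInt (fun u => exp (- u ^ 2) * RInt (fun t1 => exp (t1 ^ 2) * gauss t1) 0 u) 0 t.

Lemma phi2_RInt x : phi2 x = 2 * RInt (fun t => exp (t ^ 2) * phi2_inner t) 0 x.
Proof. reflexivity. Qed.

Lemma psi2_RInt x : psi2 x = 4 * RInt (fun t => exp (t ^ 2) * psi2_inner t) 0 x.
Proof. reflexivity. Qed.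

Lemma psi1_half x : psi1 x / 2 = RInt (fun t => exp (t ^ 2) * gauss t) 0 x.
Proof. unfold psi1, gauss. field. Qed.

Lemma is_derive_phi2_inner x : is_derive phi2_inner x (exp (- x ^ 2) * phi1 x).
Proof. apply (is_derive_RInt_upper (fun u => exp (- u ^ 2) * phi1 u)). smooth. Qed.

Lemma is_derive_psi2_inner x : is_derive psi2_inner x (exp (- x ^ 2) * (psi1 x / 2)).
Proof.
  rewrite psi1_half.
  apply (is_derive_RInt_upper
           (fun u => exp (- u ^ 2) * RInt (fun t1 => exp (t1 ^ 2) * gauss t1) 0 u)).
  smooth.
Qed.

#[global] Hint Extern 1 (is_derive phi2_inner _ _) => simple apply is_derive_phi2_inner : smooth.
#[global] Hint Extern 1 (is_derive psi2_inner _ _) => simple apply is_derive_psi2_inner : smooth.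

Lemma is_derive_phi2 x : is_derive phi2 x (2 * (exp (x ^ 2) * phi2_inner x)).
Proof.
  apply (is_derive_ext_R (fun z => 2 * RInt (fun t => exp (t ^ 2) * phi2_inner t) 0 z));
    [intros; symmetry; apply phi2_RInt |].
  apply is_derive_scal, (is_derive_RInt_upper (fun t => exp (t ^ 2) * phi2_inner t)). smooth.
Qed.

Lemma is_derive_psi2 x : is_derive psi2 x (4 * (exp (x ^ 2) * psi2_inner x)).
Proof.
  apply (is_derive_ext_R (fun z => 4 * RInt (fun t => exp (t ^ 2) * psi2_inner t) 0 z));
    [intros; symmetry; apply psi2_RInt |].
  apply is_derive_scal, (is_derive_RInt_upper (fun t => exp (t ^ 2) * psi2_inner t)). smooth.
Qed.

#[global] Hint Extern 1 (is_derive phi2 _ _) => simple apply is_derive_phi2 : smooth.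
#[global] Hint Extern 1 (is_derive psi2 _ _) => simple apply is_derive_psi2 : smooth.

Lemma chi_1_gauss_prim_decomp u :
  chi_1_gauss_prim u = sqrt PI * phi2_inner u + 2 * psi2_inner u.
Proof.
  revert u. apply (eq_of_is_derive _ _ (fun x => exp (- x ^ 2) * chi 1 x) 0).
  - apply is_derive_chi_1_gauss_prim.
  - intros x. auto_derive; [smooth | rewrite_Derive; rewrite chi_1_eq; field].
  - unfold chi_1_gauss_prim, phi2_inner, psi2_inner.
    rewrite !(RInt_point (V := R_CompleteNormedModule)).
    change (0 = sqrt PI * 0 + 2 * 0). ring.
Qed.

Lemma chi_2_eq z : chi 2 z = sqrt PI * (phi2 z - ln 2 * phi1 z) + psi2 z.
Proof.
  rewrite chi_2_RInt. revert z.
  apply (eq_of_is_derive _ _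
           (fun z => 2 * (exp (z ^ 2) * (chi_1_gauss_prim z - sqrt PI * ln 2 / 2))) 0).
  - intros z. apply is_derive_scal,
      (is_derive_RInt_upper (fun y => exp (y ^ 2) * (chi_1_gauss_prim y - sqrt PI * ln 2 / 2))).
    smooth.
  - intros z. auto_derive; [smooth | rewrite_Derive; rewrite chi_1_gauss_prim_decomp; field].
  - rewrite phi2_RInt, psi2_RInt. unfold phi1.
    rewrite !(RInt_point (V := R_CompleteNormedModule)).
    change (2 * 0 = sqrt PI * (2 * 0 - ln 2 * 0) + 4 * 0). ring.
Qed.

(** * Parities *)

Lemma phi1_opp x : phi1 (- x) = - phi1 x.
Proof. apply RInt_0_opp_of_even; [smooth | apply exp_sq_opp]. Qed.

Lemma RInt_exp_sq_gauss_opp x :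
  RInt (fun t => exp (t ^ 2) * gauss t) 0 (- x) = RInt (fun t => exp (t ^ 2) * gauss t) 0 x.
Proof.
  apply RInt_0_opp_of_odd; [smooth |]. intros y. rewrite exp_sq_opp, gauss_opp. ring.
Qed.

Lemma psi1_opp x : psi1 (- x) = psi1 x.
Proof. unfold psi1. f_equal. apply RInt_exp_sq_gauss_opp. Qed.

Lemma phi2_inner_opp x : phi2_inner (- x) = phi2_inner x.
Proof.
  apply RInt_0_opp_of_odd; [smooth |]. intros y. rewrite exp_neg_sq_opp, phi1_opp. ring.
Qed.

Lemma psi2_inner_opp x : psi2_inner (- x) = - psi2_inner x.
Proof.
  apply RInt_0_opp_of_even; [smooth |]. intros y.
  rewrite exp_neg_sq_opp, RInt_exp_sq_gauss_opp. reflexivity.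
Qed.

Lemma phi2_opp x : phi2 (- x) = - phi2 x.
Proof.
  rewrite !phi2_RInt, Ropp_mult_distr_r. f_equal.
  apply RInt_0_opp_of_even; [smooth |]. intros y. rewrite exp_sq_opp, phi2_inner_opp. reflexivity.
Qed.

Lemma psi2_opp x : psi2 (- x) = psi2 x.
Proof.
  rewrite !psi2_RInt. f_equal.
  apply RInt_0_opp_of_odd; [smooth |]. intros y. rewrite exp_sq_opp, psi2_inner_opp. ring.
Qed.

Theorem lemma2 :
  (forall z : R,
     chi 1 z = sqrt PI * phi1 z + psi1 z /\
     chi 2 z = sqrt PI * (phi2 z - ln 2 * phi1 z) + psi2 z) /\
  (forall x : R, phi1 (- x) = - phi1 x) /\
  (forall x : R, phi2 (- x) = - phi2 x) /\
  (forall x : R, psi1 (- x) = psi1 x) /\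
  (forall x : R, psi2 (- x) = psi2 x).
Proof.
  split; [intros z; split; [apply chi_1_eq | apply chi_2_eq] |].
  split; [apply phi1_opp |].
  split; [apply phi2_opp |].
  split; [apply psi1_opp | apply psi2_opp].
Qed.
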